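(* There exists $n_0$ such that for all positive integers $N$ and $k$ with $n := \binom{N}{k} \ge n_0$ and $k \le \sqrt[3]{\ln n}$, there exists a tournament $T$ on $N$ nodes whose auxiliary bipartite graph $G(T)$ is $k$-covered.
   Context: Let $T=(V,E)$ be a tournament on $N$ nodes and let $k \le N$ be a positive integer. The auxiliary bipartite digraph $G(T)$ has vertex set $R \cup C$, where $R$ contains one vertex for each node of $T$ and $C$ contains one vertex for each $k$-element subset of $V$. Its arcs are: for each $X = \{v_1,\dots,v_k\} \in C$, the arcs $(v_i, X)$ for $1 \le i \le k$; and for each $u \in R$ and $X \in C$, the arc $(X, u)$ if and only if $u$ dominates $X$ in $T$, i.e. $(u, v_i) \in E$ for all $v_i \in X$. A set of vertices $W = \{w_1,\dots,w_t\}$ of a digraph is covered if there is a vertex $y$ such that $(w_j, y)$ is an arc for all $1 \le j \le t$. A bipartite digraph is $k$-covered if every collection of $k$ vertices lying on the same side of the bipartition is covered. Here $\ln$ is the natural logarithm. *)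

From mathcomp Require Import all_boot.
From Stdlib Require Import Reals.
Set Implicit Arguments. Unset Strict Implicit. Unset Printing Implicit Defensive.

Definition tournament (N : nat) (E : rel 'I_N) : Prop :=
  (forall u, ~~ E u u) /\ (forall u v, u != v -> E u v = ~~ E v u).

Definition dominates (N : nat) (E : rel 'I_N) (u : 'I_N) (X : {set 'I_N}) : bool :=
  [forall x in X, E u x].

Definition kset (N k : nat) := {X : {set 'I_N} | #|X| == k}.

(* vertex set R + C of the auxiliary bipartite digraph G(T) *)
Definition Gvert (N k : nat) := ('I_N + kset N k)%type.

Definition is_R (N k : nat) (a : Gvert N k) : bool :=
  if a is inl _ then true else false.

Definition Garc (N k : nat) (E : rel 'I_N) (a b : Gvert N k) : bool :=
  match a, b with
  | inl v, inr X => v \in val X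
  | inr X, inl u => dominates E u (val X)
  | _, _ => false
  end.

Definition covered (V : finType) (arc : rel V) (W : {set V}) : Prop :=
  exists y, forall w, w \in W -> arc w y.

Definition k_covered (V : finType) (side : pred V) (arc : rel V) (k : nat) : Prop :=
  forall W : {set V}, #|W| = k ->
    (W \subset side) || (W \subset [predC side]) -> covered arc W.

Definition G_k_covered (N k : nat) (E : rel 'I_N) : Prop :=
  k_covered (@is_R N k) (@Garc N k E) k.

(* Put m = k^2 and d = 4 m^2 2^m.  In a uniformly random tournament on m + d
   nodes a fixed m-set is dominated by none of the other d nodes with
   probability (1 - 2^-m)^d, and C(m + d, m) (1 - 2^-m)^d < 1, so some
   tournament has every m-set dominated.  Letting the remaining nodes lose to
   all of these keeps every set of at most m nodes dominated.  That suffices for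
   G(T): k nodes are covered by the k-set they form, and k k-sets by any node
   dominating their union, which has at most k^2 elements.  Finally
   k^3 <= ln n gives (5/2)^(k^3) <= n <= N^k, i.e. (5/2)^m <= N, and this
   exceeds m + d once m >= 40; n0 takes care of k <= 6. *)

From mathcomp Require Import all_boot zify.
From Stdlib Require Import Reals Lra.
(* [Reals] rebinds [^] on [nat] to [Nat.pow]. *)
Notation "m ^ n" := (expn m n) : nat_scope.
Set Implicit Arguments. Unset Strict Implicit. Unset Printing Implicit Defensive.

Lemma ffact_leq_expn n m : n ^_ m <= n ^ m.
Proof.
by elim: m => [|m IH] //; rewrite ffactnSr expnSr leq_mul // leq_subr.
Qed.

Lemma bin_leq_expn n m : 'C(n, m) <= n ^ m.
Proof.
by apply: leq_trans (ffact_leq_expn n m); rewrite -bin_ffact leq_pmulr ?fact_gt0.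
Qed.

Lemma bernoulli_expn a n : a ^ n.+1 + n.+1 * a ^ n <= (a + 1) ^ n.+1.
Proof.
elim: n => [|n IH]; first by rewrite !expn1 expn0 muln1.
rewrite (expnS (a + 1)); apply: leq_trans (leq_mul (leqnn (a + 1)) IH).
rewrite !expnS; nia.
Qed.

Lemma leq_double_expn_succ a : 2 * a ^ a.+1 <= a.+1 ^ a.+1.
Proof.
have := bernoulli_expn a a; rewrite addn1; apply: leq_trans.
by rewrite mul2n -addnn leq_add2l expnS leq_mul.
Qed.

Lemma square_lt_exp8 m : 0 < m -> 4 * m ^ 2 + 1 < 8 ^ m.
Proof.
elim: m => [|[|m] IH] // _; have := IH isT.
rewrite (expnS 8 m.+1); move: (8 ^ m.+1) => x; nia.
Qed.

Definition slack m := 4 * m ^ 2 * 2 ^ m.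

Lemma slack_union_bound m : 0 < m ->
  'C(m + slack m, m) * (2 ^ m - 1) ^ slack m < 2 ^ (m * slack m).
Proof.
move=> m0; set q := 2 ^ m; set t := 4 * m ^ 2.
have q2 : 2 <= q by rewrite /q -{1}(expn1 2) leq_pexp2l.
have slack_tq : slack m = t * q by [].
have bin_lt : 'C(m + slack m, m) < 2 ^ t.
  apply: leq_ltn_trans (bin_leq_expn _ _) _.
  have mq : m <= q by apply: ltnW; rewrite ltn_expl.
  apply: (@leq_ltn_trans ((t.+1 * q) ^ m)).
    by rewrite leq_exp2r // slack_tq mulSn leq_add2r.
  have -> : 2 ^ t = 2 ^ (m * m) * ((2 ^ 3) ^ m) ^ m.
    by rewrite -!expnM -expnD /t; congr (2 ^ _); nia.
  rewrite expnMn /q -expnM mulnC ltn_pmul2l ?expn_gt0 // ltn_exp2r //.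
  by rewrite /t -addn1 square_lt_exp8.
have q_pred : q = (q - 1).+1 by rewrite subn1 prednK // ltnW.
apply: leq_trans (_ : 2 ^ t * (q - 1) ^ slack m <= _).
  by rewrite ltn_pmul2r // expn_gt0 subn_gt0 q2.
have t0 : 0 < t by rewrite muln_gt0 expn_gt0 m0.
have := leq_double_expn_succ (q - 1); rewrite -q_pred -(leq_exp2r _ _ t0).
by rewrite expnMn -!expnM (mulnC q t) -slack_tq.
Qed.

Lemma leq_slack : {homo slack : m n / m <= n}.
Proof.
by move=> m n mn; rewrite /slack leq_mul ?leq_mul2l ?leq_exp2r ?leq_pexp2l ?mn ?orbT.
Qed.

Lemma square_exp4_leq_exp5 m : 40 <= m -> (4 * m ^ 2 + 1) * 4 ^ m <= 5 ^ m.
Proof.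
elim: m => [//|m IH]; rewrite leq_eqVlt => /predU1P [<- | m40].
  (* (4 * 40^2 + 1) 4^40 <= 3^8 4^40 = (3 * 4^5)^8 <= (5^5)^8 *)
  have base : (3 * 4 ^ 5) ^ 8 <= (5 ^ 5) ^ 8 by rewrite leq_exp2r.
  by rewrite expnMn -!expnM in base; apply: leq_trans base; rewrite leq_mul2r.
rewrite (expnS 4) (expnS 5); apply: leq_trans (leq_mul (leqnn 5) (IH m40)).
move: (4 ^ m) => x; nia.
Qed.

Lemma order_leq_exp5 m : 40 <= m -> (m + slack m) * 2 ^ m <= 5 ^ m.
Proof.
move=> m40; apply: leq_trans (square_exp4_leq_exp5 m40).
have mq : m <= 2 ^ m by apply: ltnW; rewrite ltn_expl.
have -> : 4 ^ m = 2 ^ m * 2 ^ m by rewrite -expnMn.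
rewrite /slack mulnDl [_ + 1]addnC mulnDl mul1n -mulnA.
by rewrite leq_add2r leq_mul2r mq orbT.
Qed.

Lemma INR_expn a n : INR (a ^ n) = (INR a ^ n)%R.
Proof. by elim: n => [|n IH] //; rewrite expnS mulnE mult_INR IH. Qed.

Lemma exp_INR_mul K x : exp (INR K * x) = (exp x ^ K)%R.
Proof.
elim: K => [|K IH]; first by rewrite Rmult_0_l exp_0.
by rewrite S_INR Rmult_plus_distr_r Rmult_1_l exp_plus IH Rmult_comm.
Qed.

Lemma five_halves_lt_e : (5 / 2 < exp 1)%R.
Proof.
have e6 : (1 + / 6 < exp (/ 6))%R by apply: exp_ineq1; lra.
have -> : exp 1 = (exp (/ 6) ^ 6)%R.
  by rewrite -exp_INR_mul; congr exp; rewrite /=; field.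
apply: Rlt_le_trans (pow_incr (1 + / 6) _ 6 _); [simpl; lra | lra].
Qed.

Lemma five_halves_pow_leq_exp K : ((5 / 2) ^ K <= exp (INR K))%R.
Proof.
rewrite -[INR K]Rmult_1_r exp_INR_mul; apply: pow_incr.
have := five_halves_lt_e; lra.
Qed.

Lemma exp5_leq_of_cube_root_ln (n k : nat) : 2 <= n ->
  (INR k <= Rpower (ln (INR n)) (1 / 3))%R -> 5 ^ (k ^ 3) <= 2 ^ (k ^ 3) * n.
Proof.
move=> n2 k_le; have n2R : (2 <= INR n)%R by apply: (le_INR 2 n); apply/leP.
have ln_pos : (0 < ln (INR n))%R by rewrite -ln_1; apply: ln_increasing; lra.
have cube_le : (INR (k ^ 3) <= ln (INR n))%R.
  have -> : ln (INR n) = (Rpower (ln (INR n)) (1 / 3) ^ 3)%R.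
    rewrite -Rpower_pow ?Rpower_mult; last exact: exp_pos.
    by rewrite (_ : 1 / 3 * INR 3 = 1)%R ?Rpower_1 //=; field.
  by rewrite INR_expn; apply: pow_incr; split => //; exact: pos_INR.
have five_halves_le : ((5 / 2) ^ (k ^ 3) <= INR n)%R.
  apply: Rle_trans (five_halves_pow_leq_exp _) _; rewrite -(exp_ln (INR n)); last lra.
  case: (Rle_lt_or_eq_dec _ _ cube_le) => [/exp_increasing/Rlt_le|->] //.
  exact: Rle_refl.
apply/leP/INR_le; rewrite mulnE mult_INR !INR_expn.
rewrite (_ : INR 5 = 5 / 2 * INR 2)%R /=; last field.
by rewrite Rpow_mult_distr Rmult_comm; apply: Rmult_le_compat_l => //; apply: pow_le; lra.
Qed.

(* [family] alone would denote the one exported by [Reals]. *)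
Lemma card_family_if (T rT : finType) (S : {set T}) (A B : simpl_pred rT) :
  #|(finfun.family (fun x => if x \in S then A else B) : simpl_pred {ffun T -> rT})|
  = #|A| ^ #|S| * #|B| ^ #|~: S|.
Proof.
rewrite card_family foldrE big_image /= (bigID (mem S)) /=.
rewrite [X in X * _](eq_bigr (fun=> #|A|)) => [|x ->] //.
rewrite [X in _ * X](eq_bigr (fun=> #|B|)) => [|x /negbTE ->] //.
rewrite !prod_nat_const; congr (_ * _ ^ _).
by apply: eq_card => x; rewrite !inE.
Qed.

Lemma card_rows_true_on (T : finType) (S : {set T}) :
  #|[pred r : {ffun T -> bool} | [forall x in S, r x]]| = 2 ^ #|~: S|.
Proof.
transitivity #|(finfun.family (fun x => if x \in S then pred1 true else predT)
                : simpl_pred {ffun T -> bool})|; last first.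
  have := card_family_if S (pred1 true) predT.
  rewrite card1 card_bool exp1n mul1n; apply.
apply: eq_card => r; rewrite !inE; apply/forall_inP/familyP => [rS x|rS x xS].
  by case: ifP => [/rS ->|].
by have := rS x; rewrite xS inE => /eqP.
Qed.

Lemma card_rows_not_all (T : finType) (S : {set T}) :
  #|[pred r : {ffun T -> bool} | [exists x in S, ~~ r x]]| = 2 ^ #|T| - 2 ^ #|~: S|.
Proof.
have := cardC [pred r : {ffun T -> bool} | [forall x in S, r x]].
rewrite card_rows_true_on card_ffun card_bool => <-; rewrite addKn.
by apply: eq_card => r; rewrite !inE negb_forall_in.
Qed.

Lemma card_bigcup_leq (I T : finType) (P : {pred I}) (F : I -> {set T}) :
  #|\bigcup_(i in P) F i| <= \sum_(i in P) #|F i|.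
Proof.
elim/big_rec2: _ => [|i U n _ IH]; first by rewrite cards0.
by apply: leq_trans (leq_card_setU _ _) _; rewrite leq_add2l.
Qed.

Lemma exists_card_superset (T : finType) (A : {set T}) m :
  #|A| <= m <= #|T| -> exists2 B : {set T}, A \subset B & #|B| = m.
Proof.
elim: m => [|m IH] /andP [Am mT].
  by exists A => //; apply/eqP; rewrite -leqn0.
have [|ne_Am] := eqVneq #|A| m.+1; first by exists A.
have [B AB Bm] : exists2 B : {set T}, A \subset B & #|B| = m.
  by apply: IH; rewrite (ltnW mT) andbT -ltnS ltn_neqAle ne_Am.
have /card_gt0P [x] : 0 < #|~: B| by have := cardsC B; lia.
rewrite inE => xB; exists (x |: B); first exact: subset_trans AB (subsetUr _ _).
by rewrite cardsU1 xB Bm.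
Qed.

Definition dominating (T : finType) (E : rel T) (m : nat) : Prop :=
  forall S : {set T}, #|S| <= m -> exists v, {in S, forall x, E v x}.

Lemma dominating_of_card_eq (T : finType) (E : rel T) m : m <= #|T| ->
  (forall S : {set T}, #|S| = m -> exists v, {in S, forall x, E v x}) ->
  dominating E m.
Proof.
move=> mT domE S Sm.
have [|B SB /domE [v dom_v]] := exists_card_superset (A := S) (m := m).
  by rewrite Sm.
by exists v => x /(subsetP SB) /dom_v.
Qed.

Section RandomTournament.
Variable M : nat.
Local Notation bitmx := {ffun 'I_M -> {ffun 'I_M -> bool}}.

(* Only the entries above the diagonal are read, so counting over all bit
   matrices is counting over uniformly random tournaments. *)
Definition tour (g : bitmx) (u v : 'I_M) : bool :=
  if u < v then g u v else if v < u then ~~ g v u else false.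

Lemma tour_tournament g : tournament (tour g).
Proof.
split=> [u|u v]; first by rewrite /tour ltnn.
rewrite /tour => neq_uv; case: ltngtP; rewrite ?negbK // => /val_inj eq_uv.
by rewrite eq_uv eqxx in neq_uv.
Qed.

Definition undominated (g : bitmx) (S : {set 'I_M}) : bool :=
  [forall v, (v \notin S) ==> [exists x in S, ~~ tour g v x]].

(* [flip S] negates and transposes the entries between S and its complement
   that [tour] reads below the diagonal.  Afterwards whether v outside S
   dominates S depends on row v alone, and being an involution, [flip S]
   preserves cardinalities. *)
Definition crossing (S : {set 'I_M}) (a b : 'I_M) : bool :=
  (a \notin S) && (b \in S) && (b < a) || (a \in S) && (b \notin S) && (a < b).

Definition flip (S : {set 'I_M}) (g : bitmx) : bitmx :=
  [ffun a => [ffun b => if crossing S a b then ~~ g b a else g a b]].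

Lemma crossingC S a b : crossing S a b = crossing S b a.
Proof. by rewrite /crossing; case: (a \in S); case: (b \in S); rewrite /= ?orbF. Qed.

Lemma flipK S : involutive (flip S).
Proof.
move=> g; apply/ffunP => a; apply/ffunP => b; rewrite !ffunE.
by case: ifP => cross_ab; rewrite ?(crossingC S b a) cross_ab ?negbK.
Qed.

Lemma tour_flip (S : {set 'I_M}) g v x :
  v \notin S -> x \in S -> tour g v x = flip S g v x.
Proof.
move=> vS xS; rewrite /tour /flip !ffunE /crossing (negbTE vS) xS /= orbF.
by case: ltngtP => // /val_inj eq_vx; rewrite eq_vx xS in vS.
Qed.

Lemma undominated_flip (S : {set 'I_M}) g :
  undominated g S = [forall v, (v \notin S) ==> [exists x in S, ~~ flip S g v x]].
Proof.
apply: eq_forallb => v; case vS: (v \in S) => //=.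
by apply: eq_existsb => x; case xS: (x \in S); rewrite //= (tour_flip (S := S)) ?vS.
Qed.

Lemma dominated_of_not_undominated g S :
  ~~ undominated g S -> exists v, {in S, forall x, tour g v x}.
Proof.
rewrite negb_forall => /existsP [v]; rewrite negb_imply negb_exists_in.
by case/andP=> _ /forall_inP dom_v; exists v => x /dom_v /negPn.
Qed.

Lemma card_undominated (S : {set 'I_M}) :
  #|[set g | undominated g S]| =
    (2 ^ M) ^ #|S| * (2 ^ M - 2 ^ #|~: S|) ^ #|~: S|.
Proof.
pose F v := if v \in S then predT
            else [pred r : {ffun 'I_M -> bool} | [exists x in S, ~~ r x]].
transitivity #|[set h in finfun.family F]|.
  rewrite -(card_preimset _ (inv_inj (flipK S))); apply: eq_card => g.
  rewrite !inE undominated_flip flipK; apply/forallP/familyP => dom v; have := dom v;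
  by rewrite /F; case: (v \in S); rewrite //= inE.
by rewrite cardsE card_family_if card_rows_not_all card_ffun card_bool !card_ord.
Qed.

Lemma exists_dominating_tour m : m <= M ->
  'C(M, m) * ((2 ^ M) ^ m * (2 ^ M - 2 ^ (M - m)) ^ (M - m)) < (2 ^ M) ^ M ->
  exists g, dominating (tour g) m.
Proof.
move=> mM count_lt.
pose B := \bigcup_(S in [pred S : {set 'I_M} | #|S| == m]) [set g | undominated g S].
have [g gB] : exists g, g \notin B.
  suff /card_gt0P [g] : 0 < #|~: B| by rewrite inE; exists g.
  have := cardsC B; rewrite card_ffun card_ffun card_bool card_ord.
  suff : #|B| < (2 ^ M) ^ M by lia.
  apply: leq_ltn_trans (card_bigcup_leq _ _) _.
  rewrite (eq_bigr (fun=> (2 ^ M) ^ m * (2 ^ M - 2 ^ (M - m)) ^ (M - m))).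
    by rewrite sum_nat_const -cardsE card_draws card_ord.
  move=> S /eqP Sm; rewrite card_undominated Sm.
  by have := cardsC S; rewrite Sm card_ord => /(canRL (addKn m)) <-.
exists g; apply: dominating_of_card_eq => [|S Sm]; first by rewrite card_ord.
apply: dominated_of_not_undominated; apply: contra gB => bad_S.
by apply/bigcupP; exists S; rewrite ?inE ?Sm.
Qed.

End RandomTournament.

Lemma exists_dominating_tournament m d :
  'C(m + d, m) * (2 ^ m - 1) ^ d < 2 ^ (m * d) ->
  exists E : rel 'I_(m + d), tournament E /\ dominating E m.
Proof.
move=> bound; have [|g dom_g] := @exists_dominating_tour (m + d) m (leq_addr _ _).
  have -> : 2 ^ (m + d) - 2 ^ (m + d - m) = 2 ^ d * (2 ^ m - 1).
    by rewrite addKn mulnBr muln1 -expnD addnC.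
  rewrite addKn expnMn -!expnM.
  have -> : 2 ^ ((m + d) * (m + d)) = 2 ^ ((m + d) * m) * 2 ^ (d * d) * 2 ^ (m * d).
    by rewrite -!expnD; congr (2 ^ _); nia.
  by rewrite mulnCA -mulnA ltn_pmul2l ?expn_gt0 // mulnCA ltn_pmul2l ?expn_gt0.
by exists (tour g); split; first exact: tour_tournament.
Qed.

Section Extension.
Variables (M N : nat) (MN : M <= N) (E : rel 'I_M).

Definition extension (u v : 'I_N) : bool :=
  match insub (val u) : option 'I_M, insub (val v) : option 'I_M with
  | Some a, Some b => E a b
  | Some _, None => true
  | None, Some _ => false
  | None, None => u < v
  end.

Lemma extension_tournament : tournament E -> tournament extension.
Proof.
move=> [irrE antiE]; split=> [u|u v neq_uv]; rewrite /extension.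
  by case: insubP => [a _ _|_]; rewrite ?irrE ?ltnn.
case: insubP => [a _ ua|_]; case: insubP => [b _ vb|_] //.
  apply: antiE; apply: contraNneq neq_uv => eq_ab.
  by apply/eqP/val_inj; rewrite -ua -vb eq_ab.
case: ltngtP; rewrite ?negbK // => /val_inj eq_uv.
by rewrite eq_uv eqxx in neq_uv.
Qed.

Lemma extension_dominating m : dominating E m -> dominating extension m.
Proof.
move=> domE S Sm.
pose w := widen_ord MN.
have w_inj : injective w by move=> a b /(congr1 val) /= /val_inj.
have [|v dom_v] := domE [set a | w a \in S].
  apply: leq_trans Sm; rewrite -(card_imset _ w_inj); apply: subset_leq_card.
  by apply/subsetP => _ /imsetP [a + ->]; rewrite inE.
exists (w v) => x Sx; rewrite /extension valK.
case: insubP => [a _ xa|_] //; apply: dom_v; rewrite inE.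
by have -> : w a = x by apply: val_inj.
Qed.

End Extension.

Section Covering.
Variables (N k : nat) (E : rel 'I_N) (W : {set Gvert N k}).
Hypothesis Wk : #|W| = k.

Lemma covered_nodes : W \subset @is_R N k -> covered (Garc E) W.
Proof.
move=> WR; pose X := [set x | inl x \in W].
have WX : W = inl @: X.
  apply/setP => [[x|Y]]; first by rewrite mem_imset ?inE // => a b [].
  apply/idP/imsetP => [/(subsetP WR) //|[] //].
have Xk : #|X| == k by rewrite -Wk WX card_imset // => a b [].
by exists (inr (exist _ X Xk)) => w; rewrite WX => /imsetP [x Xx ->].
Qed.

Lemma covered_ksets :
  dominating E (k * k) -> W \subset [predC @is_R N k] -> covered (Garc E) W.
Proof.
move=> domE WC.
pose nodes (w : Gvert N k) : {set 'I_N} := if w is inr X then val X else set0.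
have [|v dom_v] := domE (\bigcup_(w in W) nodes w).
  apply: leq_trans (card_bigcup_leq _ _) (leq_trans _ (_ : \sum_(w in W) k <= k * k)).
    by apply: leq_sum => -[x|X] _; rewrite ?cards0 // (eqP (valP X)).
  by rewrite sum_nat_const Wk.
exists (inl v) => -[x /(subsetP WC) //|X WX].
by apply/forall_inP => x Xx; apply: dom_v; apply/bigcupP; exists (inr X).
Qed.

End Covering.

Lemma G_k_covered_of_dominating N k (E : rel 'I_N) :
  dominating E (k * k) -> G_k_covered k E.
Proof.
by move=> domE W Wk /orP [WR|WC]; [apply: covered_nodes | apply: covered_ksets].
Qed.

Lemma order_leq_nodes N k : 0 < N -> 0 < k -> (36 + slack 36) ^ 6 <= 'C(N, k) ->
  (INR k <= Rpower (ln (INR 'C(N, k))) (1 / 3))%R -> k * k + slack (k * k) <= N.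
Proof.
move=> N0 k0 C_ge k_le; have C_le := bin_leq_expn N k.
have [k6|k7] := leqP k 6.
  have : (36 + slack 36) ^ 6 <= N ^ 6.
    by apply: leq_trans C_ge (leq_trans C_le _); rewrite leq_pexp2l.
  rewrite leq_exp2r // => /(leq_trans _); apply.
  have kk : k * k <= 6 * 6 := leq_mul k6 k6.
  by rewrite leq_add // leq_slack.
have C2 : 2 <= 'C(N, k).
  apply: leq_trans C_ge; apply: (@leq_trans (36 + slack 36)); first exact: ltn_addr.
  by rewrite -{1}(expn1 (36 + _)) leq_pexp2l ?addn_gt0.
have k3 : k ^ 3 = k * k * k by rewrite !expnS expn0 muln1 mulnA.
have := leq_trans (exp5_leq_of_cube_root_ln C2 k_le) (leq_mul (leqnn _) C_le).
rewrite k3 (expnM 5) (expnM 2) -expnMn leq_exp2r // => five_le.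
have m40 : 40 <= k * k by apply: leq_trans (leq_mul k7 k7).
by have := leq_trans (order_leq_exp5 m40) five_le; rewrite mulnC leq_pmul2l ?expn_gt0.
Qed.

Theorem lemma1 :
  exists n0 : nat, forall N k : nat, 0 < N -> 0 < k -> k <= N ->
    n0 <= 'C(N, k) ->
    (INR k <= Rpower (ln (INR 'C(N, k))) (1 / 3))%R ->
    exists E : rel 'I_N, tournament E /\ @G_k_covered N k E.
Proof.
exists ((36 + slack 36) ^ 6) => N k N0 k0 _ C_ge k_le.
have kk0 : 0 < k * k by rewrite muln_gt0 k0.
have [E [tourE domE]] := exists_dominating_tournament (slack_union_bound kk0).
have MN := order_leq_nodes N0 k0 C_ge k_le.
exists (extension E); split; first exact: extension_tournament.
exact/G_k_covered_of_dominating/(extension_dominating MN).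
Qed.
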